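(* Let $\sigma$ be one of the semantics $\mathit{cf2}$, $\mathit{stg2}$, $\mathit{tfcf2}$, $\mathit{cf1.5}$, $\mathit{tfstg2}$, $\mathit{stg1.5}$. Then $\sigma(\mathcal{F})\subseteq\mathit{na}(\mathcal{F})$ for every argumentation framework $\mathcal{F}$. Consequently $\sigma$ satisfies the I-maximality criterion and the CF-reinstatement criterion.
   Context: An argumentation framework (AF) is $\mathcal{F}=(A_{\mathcal{F}},R_{\mathcal{F}})$ with $R_{\mathcal{F}}\subseteq A_{\mathcal{F}}\times A_{\mathcal{F}}$ (possibly infinite); $a\rightarrow b$ means $(a,b)\in R_{\mathcal{F}}$. $\mathcal{F}|_B=(A_{\mathcal{F}}\cap B,R_{\mathcal{F}}\cap(B\times B))$. Conflict-free: no $a,b\in S$ with $a\rightarrow b$. $\mathit{na}(\mathcal{F})$ = set of naive extensions ($\subseteq$-maximal conflict-free sets). $S^\oplus=S\cup\{x:\exists y\in S,\ y\rightarrow x\}$; stage extension: conflict-free $S$ with no conflict-free $T$ such that $S^\oplus\subsetneq T^\oplus$. $S$ defends $a$ if every attacker of $a$ is attacked by some element of $S$. I-maximality: for all $\mathcal{F}$ and $S_1,S_2\in\sigma(\mathcal{F})$, $S_1\subseteq S_2$ implies $S_1=S_2$. CF-reinstatement: for all $\mathcal{F}$ and $S\in\sigma(\mathcal{F})$, if $S$ defends $a$ and $S\cup\{a\}$ is conflict-free then $a\in S$. $\mathrm{SCC}(\mathcal{F})$, $\mathrm{SCC}(a)$: strongly connected components of the attack graph (paths possibly of length 0). $D_S(X)=\{b\in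 X:\exists a\in S\setminus X,\ a\rightarrow b\}$. $\mathit{cf2}$: $S\in\mathit{cf2}(\mathcal{F})$ iff either $|\mathrm{SCC}(\mathcal{F})|=1$ and $S$ is naive in $\mathcal{F}$, or $|\mathrm{SCC}(\mathcal{F})|\ne1$ and for each $X\in\mathrm{SCC}(\mathcal{F})$, $S\cap X\in\mathit{cf2}(\mathcal{F}|_{X\setminus D_S(X)})$, recursively; $S$ is a member only when this recursion is well-founded (no infinite chain of recursive calls) and succeeds. $\mathit{stg2}$: same with stage for naive. $\mathit{tfcf2}$/$\mathit{tfstg2}$: $C^0_S(a)=\mathrm{SCC}(a)$; $C^{\alpha+1}_S(a)$ = component of $a$ in $\mathcal{F}|_{C^\alpha_S(a)\setminus D_S(C^\alpha_S(a))}$ (empty if $a$ not there); for limit $\lambda$, $C^\lambda_S(a)$ = component of $a$ in $\mathcal{F}|_{\bigcap_{\alpha<\lambda}C^\alpha_S(a)}$; $\alpha_S(a)$ = least $\alpha$ with $a\notin C^\alpha_S(a)$ or $C^{\alpha+1}_S(a)=C^\alpha_S(a)$; $S\in\mathit{tfcf2}(\mathcal{F})$ (resp. $\mathit{tfstg2}$) iff $S$ conflict-free and for each $a$, $a\notin C^{\alpha_S(a)}_S(a)$ or $S\cap C^{\alpha_S(a)}_S(a)$ is naive (resp. stage) in $\mathcal{F}|_{C^{\alpha_S(a)}_S(a)}$. $\mathit{cf1.5}$/$\mathit{stg1.5}$: $S$ conflict-free and for each $X\in\mathrm{SCC}(\mathcal{F})$, $S\cap X$ is naive (resp. stage) in $\mathcal{F}|_{X\setminus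 D_S(X)}$. *)

Set Implicit Arguments.

Record AF (U : Type) : Type := mkAF {
  args : U -> Prop;
  att  : U -> U -> Prop;
  att_wf : forall a b, att a b -> args a /\ args b
}.
Arguments args {U} _ _.
Arguments att {U} _ _ _.

Section Defs.
Variable U : Type.
Implicit Types (F : AF U) (S T X B : U -> Prop).

Definition subset S T : Prop := forall x, S x -> T x.
Definition set_eq S T : Prop := subset S T /\ subset T S.

Definition restrict F B : AF U.
Proof.
  refine (@mkAF U (fun x => args F x /\ B x)
                  (fun x y => att F x y /\ B x /\ B y) _).
  intros a b [Hab [Ha Hb]]; destruct (@att_wf U F a b Hab); tauto.
Defined.

Definition conflict_free F S : Prop :=
  subset S (args F) /\ forall a b, S a -> S b -> ~ att F a b.

Definition naive F S : Prop :=
  conflict_free F S /\ forall T, conflict_free F T -> subset S T -> subset T S.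

Definition range F S : U -> Prop := fun x => S x \/ exists y, S y /\ att F y x.

Definition stage F S : Prop :=
  conflict_free F S /\
  ~ (exists T, conflict_free F T /\
        subset (range F S) (range F T) /\ ~ subset (range F T) (range F S)).

Definition defends F S a : Prop :=
  forall b, att F b a -> exists c, S c /\ att F c b.

Inductive reach F : U -> U -> Prop :=
| reach_refl x : args F x -> reach F x x
| reach_step x y z : att F x y -> reach F y z -> reach F x z.

(* SCC(a) (empty if a is not an argument) *)
Definition scc F a : U -> Prop := fun b => reach F a b /\ reach F b a.

Definition is_SCC F X : Prop :=
  exists a, args F a /\ forall b, X b <-> scc F a b.

Definition one_SCC F : Prop :=
  exists a, args F a /\ forall b, args F b -> scc F a b.

Definition Dset F S X : U -> Prop :=
  fun b => X b /\ exists a, S a /\ ~ X a /\ att F a b.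

Definition setminus X B : U -> Prop := fun x => X x /\ ~ B x.
Definition setI S X : U -> Prop := fun x => S x /\ X x.

End Defs.

Definition semantics : Type := forall U : Type, AF U -> (U -> Prop) -> Prop.

(* SCC-recursive scheme (cf2 / stg2).  Membership is the inductive (least)
   predicate: it holds exactly when the recursion tree is well-founded and
   every branch succeeds. *)
Inductive scc_rec (base : semantics) (U : Type) : AF U -> (U -> Prop) -> Prop :=
| scc_rec_one F S :
    one_SCC F -> base U F S -> scc_rec base F S
| scc_rec_split F S :
    subset S (args F) ->
    ~ one_SCC F ->
    (forall X, is_SCC F X ->
       scc_rec base (restrict F (setminus X (Dset F S X))) (setI S X)) ->
    scc_rec base F S.

Definition cf2 : semantics := fun U => @scc_rec naive U.
Definition stg2 : semantics := fun U => @scc_rec stage U.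

Definition scc15 (base : semantics) : semantics := fun U F S =>
  conflict_free F S /\
  forall X, is_SCC F X -> base U (restrict F (setminus X (Dset F S X))) (setI S X).

Definition cf15 : semantics := scc15 naive.
Definition stg15 : semantics := scc15 stage.

(* The values of the ordinal-indexed
   sequence are represented by the "tower": the least family of sets
   containing C^0 = SCC(a), closed under the successor step and under
   "component of a in the intersection of any subfamily" (limit step). *)
Section TF.
Variables (U : Type) (F : AF U) (S : U -> Prop) (a : U).

Definition tf_step (X : U -> Prop) : U -> Prop :=
  scc (restrict F (setminus X (Dset F S X))) a.

Inductive tower : (U -> Prop) -> Prop :=
| tower_base : tower (scc F a)
| tower_succ X : tower X -> tower (tf_step X)
| tower_lim (P : (U -> Prop) -> Prop) :
    (forall X, P X -> tower X) ->
    tower (scc (restrict F (fun x => forall X, P X -> X x)) a).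

(* X is the value C^{alpha_S(a)}_S(a): a stage of the sequence with
   a ∉ X or C^{alpha+1} = C^alpha (all later stages coincide with it). *)
Definition tf_final (X : U -> Prop) : Prop :=
  tower X /\ (~ X a \/ set_eq (tf_step X) X).
End TF.

Definition tf_scheme (base : semantics) : semantics := fun U F S =>
  conflict_free F S /\
  forall a, args F a -> forall X, tf_final F S a X ->
    ~ X a \/ base U (restrict F X) (setI S X).

Definition tfcf2 : semantics := tf_scheme naive.
Definition tfstg2 : semantics := tf_scheme stage.

Definition na : semantics := fun U => @naive U.

Definition I_maximality (sigma : semantics) : Prop :=
  forall U (F : AF U) S1 S2, sigma U F S1 -> sigma U F S2 ->
    subset S1 S2 -> set_eq S1 S2.

Definition CF_reinstatement (sigma : semantics) : Prop :=
  forall U (F : AF U) S a, sigma U F S -> defends F S a ->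
    conflict_free F (fun x => S x \/ x = a) -> S a.

Arguments na : clear implicits.
Arguments cf2 : clear implicits.
Arguments stg2 : clear implicits.
Arguments cf15 : clear implicits.
Arguments stg15 : clear implicits.
Arguments tfcf2 : clear implicits.
Arguments tfstg2 : clear implicits.

(* A set S accepted by any of these semantics is conflict-free, and it is
   maximal because maximality can be checked locally.  If T is conflict-free,
   contains S and contains t, then no member of S attacks t.  So t is never
   removed as an element of D_S: neither from SCC(t), nor at any stage of the
   transfinite sequence C_S(t).  On the piece that contains t, S is naive
   (stage extensions are naive), and therefore t is in S.  For cf2, the base
   semantics applies only at the leaves of the recursion, so we also have to
   recover conflict-freeness.  An attack inside an SCC is excluded by the
   naive sub-extension.  An attack from another SCC puts its target in D_S.
   Once sigma(F) is contained in na(F), I-maximality holds by maximality.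
   CF-reinstatement holds because S together with a is conflict-free. *)

From Stdlib Require Import Classical.
Set Implicit Arguments.

Section Naive.
Variable U : Type.
Implicit Types (F : AF U) (S T X B : U -> Prop).

Lemma reach_restrict F B x z : reach (restrict F B) x z -> B x /\ B z.
Proof.
  induction 1 as [x [_ Bx] | x y z [_ [Bx _]] _ IH]; tauto.
Qed.

Lemma scc_refl {F a} : args F a -> scc F a a.
Proof. split; constructor; assumption. Qed.

Lemma is_SCC_scc {F a} : args F a -> is_SCC F (scc F a).
Proof. intros Ha; exists a; split; [exact Ha | tauto]. Qed.

Lemma stage_naive F S : stage F S -> naive F S.
Proof.
  intros [HcfS Hstage]; split; [exact HcfS |].
  intros T HcfT HST t Tt.
  destruct (classic (subset (range F T) (range F S))) as [Hrange | Hrange].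
  - destruct (Hrange t (or_introl Tt)) as [St | [s [Ss Hst]]]; [exact St |].
    destruct (proj2 HcfT s t (HST s Ss) Tt Hst).
  - exfalso; apply Hstage; exists T; split; [exact HcfT | split; [| exact Hrange]].
    intros x [Sx | [y [Sy Hyx]]]; [left | right; exists y]; auto.
Qed.

Lemma unattacked_in_cf_superset F S T {t} :
  conflict_free F T -> subset S T -> T t -> ~ (exists s, S s /\ att F s t).
Proof.
  intros HcfT HST Tt [s [Ss Hst]]; exact (proj2 HcfT s t (HST s Ss) Tt Hst).
Qed.

Lemma notin_Dset_cf_superset F S T {X t} :
  conflict_free F T -> subset S T -> T t -> ~ Dset F S X t.
Proof.
  intros HcfT HST Tt [_ [s [Ss [_ Hst]]]].
  exact (unattacked_in_cf_superset HcfT HST Tt (ex_intro _ s (conj Ss Hst))).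
Qed.

Lemma naive_restrict_maximal F B S X T {t} :
  naive (restrict F B) (setI S X) -> conflict_free F T -> subset S T ->
  T t -> B t -> S t.
Proof.
  intros [[HSX _] Hmax] HcfT HST Tt Bt.
  assert (Hcf_TB : conflict_free (restrict F B) (fun x => T x /\ B x)).
  { split.
    - intros x [Tx Bx]; split; [exact (proj1 HcfT x Tx) | exact Bx].
    - intros a b [Ta _] [Tb _] [Hab _]; exact (proj2 HcfT a b Ta Tb Hab). }
  assert (Hsub : subset (setI S X) (fun x => T x /\ B x)).
  { intros x [Sx Xx]; split; [exact (HST x Sx) |].
    exact (proj2 (HSX x (conj Sx Xx))). }
  exact (proj1 (Hmax _ Hcf_TB Hsub t (conj Tt Bt))).
Qed.

Lemma naive_of_scc_naive F S :
  conflict_free F S ->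
  (forall X, is_SCC F X -> naive (restrict F (setminus X (Dset F S X))) (setI S X)) ->
  naive F S.
Proof.
  intros HcfS Hscc; split; [exact HcfS |].
  intros T HcfT HST t Tt.
  assert (At : args F t) by exact (proj1 HcfT t Tt).
  apply (naive_restrict_maximal (Hscc _ (is_SCC_scc At)) HcfT HST Tt).
  split; [exact (scc_refl At) | exact (notin_Dset_cf_superset HcfT HST Tt)].
Qed.

Lemma conflict_free_of_scc_naive F S :
  subset S (args F) ->
  (forall X, is_SCC F X -> naive (restrict F (setminus X (Dset F S X))) (setI S X)) ->
  conflict_free F S.
Proof.
  intros HS Hscc; split; [exact HS |].
  intros s1 s2 S1 S2 H12.
  set (X := scc F s2).
  destruct (Hscc X (is_SCC_scc (HS s2 S2))) as [[HSX HcfSX] _].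
  assert (X2 : setI S X s2) by exact (conj S2 (scc_refl (HS s2 S2))).
  destruct (proj2 (HSX s2 X2)) as [_ ND2].
  destruct (classic (X s1)) as [X1 | NX1].
  - assert (X1' : setI S X s1) by exact (conj S1 X1).
    apply (HcfSX s1 s2 X1' X2).
    exact (conj H12 (conj (proj2 (HSX s1 X1')) (proj2 (HSX s2 X2)))).
  - apply ND2; split; [exact (proj2 X2) | exists s1; auto].
Qed.

Section Tower.
Variables (F : AF U) (S : U -> Prop) (t : U).
Hypotheses (At : args F t) (Hfree : ~ (exists s, S s /\ att F s t)).

Lemma tower_mem X : tower F S t X -> X t.
Proof.
  induction 1 as [| X _ IH | P _ IH]; apply scc_refl.
  - exact At.
  - split; [exact At |].
    split; [exact IH |].
    intros [_ [s [Ss [_ Hst]]]]; exact (Hfree (ex_intro _ s (conj Ss Hst))).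
  - split; [exact At | exact IH].
Qed.

(* The limit over the whole tower contains its own successor, so it is final. *)
Lemma tf_final_tower_limit :
  tf_final F S t (scc (restrict F (fun x => forall X, tower F S t X -> X x)) t).
Proof.
  set (M := scc (restrict F (fun x => forall X, tower F S t X -> X x)) t).
  assert (TM : tower F S t M) by (apply tower_lim; auto).
  split; [exact TM | right]; split.
  - intros x [Hx _]; exact (proj1 (proj2 (reach_restrict Hx))).
  - intros x [_ Hx]; exact (proj1 (reach_restrict Hx) _ (tower_succ TM)).
Qed.

End Tower.

Lemma naive_of_tf_scheme (base : semantics) F S :
  (forall F' S', base U F' S' -> naive F' S') ->
  tf_scheme base F S -> naive F S.
Proof.
  intros Hbase [HcfS Hfinal]; split; [exact HcfS |].
  intros T HcfT HST t Tt.
  assert (At : args F t) by exact (proj1 HcfT t Tt).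
  assert (Hfree := unattacked_in_cf_superset HcfT HST Tt).
  assert (Mt : scc (restrict F (fun x => forall X, tower F S t X -> X x)) t t).
  { apply scc_refl; split; [exact At |].
    intros X; exact (tower_mem At Hfree (X := X)). }
  destruct (Hfinal t At _ (tf_final_tower_limit F S t)) as [NMt | Hb];
    [contradiction |].
  exact (naive_restrict_maximal (Hbase _ _ Hb) HcfT HST Tt Mt).
Qed.

End Naive.

Definition contained_in_na (sigma : semantics) : Prop :=
  forall U (F : AF U) S, sigma U F S -> na U F S.

Lemma stage_contained_in_na : contained_in_na (fun U => @stage U).
Proof. intros U F S; apply stage_naive. Qed.

Lemma naive_contained_in_na : contained_in_na (fun U => @naive U).
Proof. intros U F S H; exact H. Qed.

Lemma scc_rec_contained_in_na base :
  contained_in_na base -> contained_in_na (fun U => @scc_rec base U).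
Proof.
  intros Hbase U F S H.
  induction H as [F S _ Hb | F S HS _ _ IH]; [exact (Hbase _ _ _ Hb) |].
  exact (naive_of_scc_naive (conflict_free_of_scc_naive HS IH) IH).
Qed.

Lemma scc15_contained_in_na base :
  contained_in_na base -> contained_in_na (scc15 base).
Proof.
  intros Hbase U F S [HcfS Hscc].
  exact (naive_of_scc_naive HcfS (fun X HX => Hbase _ _ _ (Hscc X HX))).
Qed.

Lemma tf_scheme_contained_in_na base :
  contained_in_na base -> contained_in_na (tf_scheme base).
Proof.
  intros Hbase U F S; apply naive_of_tf_scheme, Hbase.
Qed.

Lemma I_maximality_of_contained_in_na sigma :
  contained_in_na sigma -> I_maximality sigma.
Proof.
  intros Hna U F S1 S2 H1 H2 H12; split; [exact H12 |].
  exact (proj2 (Hna _ _ _ H1) S2 (proj1 (Hna _ _ _ H2)) H12).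
Qed.

Lemma CF_reinstatement_of_contained_in_na sigma :
  contained_in_na sigma -> CF_reinstatement sigma.
Proof.
  intros Hna U F S a HS _ Hcf.
  apply (proj2 (Hna _ _ _ HS) _ Hcf); [intros x Sx; left; exact Sx | right; reflexivity].
Qed.

Theorem theorem10 (sigma : semantics)
  (Hsigma : sigma = cf2 \/ sigma = stg2 \/ sigma = tfcf2 \/
            sigma = cf15 \/ sigma = tfstg2 \/ sigma = stg15) :
  (forall (U : Type) (F : AF U) (S : U -> Prop), sigma U F S -> na U F S) /\
  I_maximality sigma /\ CF_reinstatement sigma.
Proof.
  assert (Hna : contained_in_na sigma).
  { destruct Hsigma as [E | [E | [E | [E | [E | E]]]]]; subst sigma.
    - exact (scc_rec_contained_in_na naive_contained_in_na).
    - exact (scc_rec_contained_in_na stage_contained_in_na).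
    - exact (tf_scheme_contained_in_na naive_contained_in_na).
    - exact (scc15_contained_in_na naive_contained_in_na).
    - exact (tf_scheme_contained_in_na stage_contained_in_na).
    - exact (scc15_contained_in_na stage_contained_in_na). }
  split; [exact Hna |].
  split; [exact (I_maximality_of_contained_in_na Hna) |
          exact (CF_reinstatement_of_contained_in_na Hna)].
Qed.
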